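(* Let $q=p^h$ with $p$ prime, $h\geq 1$, and let $c$ be a codeword of minimum weight of $C(PG(2,q))^\perp$. If $p=7$, then $wt(c)\geq (12q+6)/7$. If $p>7$, then $wt(c)\geq (12q+18)/7$. No divisibility assumption on $wt(c)$ is required.
   Context: $C(PG(2,q))$ is the $\mathbb{F}_p$-span of the incidence vectors of the lines of $PG(2,q)$, with coordinates indexed by points. $C^\perp$ is its dual with respect to the standard scalar product over $\mathbb{F}_p$. The weight is the number of nonzero coordinates. *)

From HB Require Import structures.
From mathcomp Require Import all_boot all_order all_algebra all_field.
Set Implicit Arguments. Unset Strict Implicit. Unset Printing Implicit Defensive.
Import GRing.Theory.
Local Open Scope ring_scope.

(* Standard model of PG(2,q) over a finite field F (|F| = q): points and
   lines are both represented by nonzero vectors of F^3 normalised so that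
   their first nonzero coordinate is 1 (one representative per 1-dim
   subspace); point x is on line l iff x . l = 0. *)
Definition normalized (F : finFieldType) (v : 'rV[F]_3) : bool :=
  [exists i : 'I_3, (v 0 i == 1) && [forall j : 'I_3, (j < i)%N ==> (v 0 j == 0)]].

Definition pg_point (F : finFieldType) := {v : 'rV[F]_3 | normalized v}.
Definition pg_line (F : finFieldType) := {v : 'rV[F]_3 | normalized v}.

Definition incident (F : finFieldType) (x : pg_point F) (l : pg_line F) : bool :=
  \sum_(i < 3) (val x) 0 i * (val l) 0 i == 0.

Notation word F p := {ffun pg_point F -> 'F_p}.

Definition inc_vec (F : finFieldType) (p : nat) (l : pg_line F) : word F p :=
  [ffun x => (incident x l)%:R].

Definition in_code (F : finFieldType) (p : nat) (c : word F p) : Prop :=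
  exists a : {ffun pg_line F -> 'F_p}, forall x : pg_point F, c x = \sum_(l : pg_line F) a l * inc_vec p l x.

Definition dotw (F : finFieldType) (p : nat) (c d : word F p) : 'F_p :=
  \sum_(x : pg_point F) c x * d x.

Definition in_dual (F : finFieldType) (p : nat) (c : word F p) : Prop :=
  forall d : word F p, in_code d -> dotw c d = 0.

Definition wt (F : finFieldType) (p : nat) (c : word F p) : nat :=
  #|[set x | c x != 0]|.

Definition min_weight_dual (F : finFieldType) (p : nat) (c : word F p) : Prop :=
  [/\ in_dual c, c != 0 & forall d : word F p, in_dual d -> d != 0 -> (wt c <= wt d)%N].

From HB Require Import structures.
From mathcomp Require Import all_boot all_order all_algebra all_field.
From mathcomp Require Import zify.
Set Implicit Arguments. Unset Strict Implicit. Unset Printing Implicit Defensive.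
Import GRing.Theory.

(* Let S be the support of c and P a point of S.  Orthogonality to
   the incidence vector of a line l says that the values of c on l add up to 0.
   - If every line through P meets S in at least three points, the q + 1 lines
     through P give |S| >= 2(q + 1) + 1.
   - Otherwise some line through P is a 2-secant {P, R} with c R = - c P.
     Scale c so that c P = 1 and read the values as residues in {0,...,p-1}:
     residue sums on lines are multiples of p.  Every line through P carries at
     least p, every line through R at most p (|l & S| - 1); since two points
     span a unique line, double counting over the two pencils yields
     p |S| >= 2 (p - 1)(q + 1) + 2.
   In both cases p |S| >= 2 (p - 1)(q + 1) + 2 (Lemma dual_weight_bound), and
   the two estimates of the theorem follow by arithmetic, using q >= p.  The
   bound holds for every nonzero word of the dual code. *)

Section ProjectivePlane.
Local Open Scope ring_scope.
Variable F : finFieldType.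

Lemma normalized_neq0 (u : 'rV[F]_3) : normalized u -> u != 0.
Proof.
move=> /existsP[i /andP[/eqP ui _]]; apply/eqP=> u0.
by move: ui; rewrite u0 mxE => /eqP; rewrite eq_sym oner_eq0.
Qed.

Lemma normalized_scale_eq (u v : 'rV[F]_3) (a : F) :
  normalized u -> normalized v -> v = a *: u -> v = u.
Proof.
move=> /existsP[i /andP[/eqP ui /forallP u0]] /existsP[j /andP[/eqP vj /forallP v0]] vau.
have ev k : v 0 k = a * u 0 k by rewrite vau mxE.
case: (ltngtP i j) => [lij|lji|/val_inj eij].
- have := v0 i; rewrite lij /= ev ui mulr1 => /eqP a0.
  by move: vj; rewrite ev a0 mul0r => /eqP; rewrite eq_sym oner_eq0.
- have := u0 j; rewrite lji /= => /eqP uj0.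
  by move: vj; rewrite ev uj0 mulr0 => /eqP; rewrite eq_sym oner_eq0.
- by move: vj; rewrite -eij ev ui mulr1 => a1; rewrite vau a1 scale1r.
Qed.

Lemma rank_col_mx_ge2 (u v : 'rV[F]_3) :
  normalized u -> normalized v -> u != v -> (2 <= \rank (col_mx u v))%N.
Proof.
move=> nu nv uv; rewrite leqNgt ltnS; apply/negP => le1.
have ru : \rank u = 1%N by rewrite rank_rV normalized_neq0.
have uA : (u <= col_mx u v)%MS by rewrite -addsmxE addsmxSl.
have Au : (col_mx u v <= u)%MS.
  by rewrite -(mxrank_leqif_sup uA).2 eqn_leq mxrankS //= ru le1.
have /submxP[D vD] : (v <= u)%MS.
  by apply: submx_trans Au; rewrite -addsmxE addsmxSr.
have vu : v = u.
  apply: (normalized_scale_eq (a := D 0 0) nu nv).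
  by rewrite vD; apply/rowP=> k; rewrite !mxE big_ord1.
by move: uv; rewrite vu eqxx.
Qed.

Definition pencil (x : pg_point F) : {set pg_line F} := [set l | incident x l].

Lemma incidentE (x : pg_point F) (l : pg_line F) :
  incident x l = (val l <= kermx (val x)^T)%MS.
Proof.
apply/eqP/sub_kermxP => [h | /matrixP/(_ 0 0)]; last first.
  rewrite !mxE => h; rewrite -[RHS]h.
  by apply: eq_bigr => k _; rewrite !mxE mulrC.
apply/matrixP=> i j; rewrite !ord1 !mxE -[RHS]h.
by apply: eq_bigr => k _; rewrite !mxE mulrC.
Qed.

Lemma unique_line (x y : pg_point F) :
  x != y -> (#|pencil x :&: pencil y| <= 1)%N.
Proof.
move=> xy; rewrite leqNgt; apply/negP => /card_gt1P[l [l' [+ + ll']]].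
rewrite !inE !incidentE => /andP[xl yl] /andP[xl' yl'].
have neqv (a b : {v : 'rV[F]_3 | normalized v}) : a != b -> val a != val b.
  by apply: contra => /eqP/val_inj ->.
set A := col_mx (val x) (val y).
have inK (m : pg_line F) : (val m <= kermx (val x)^T)%MS -> (val m <= kermx (val y)^T)%MS ->
    (val m <= kermx A^T)%MS.
  move=> /sub_kermxP mx /sub_kermxP my.
  by apply/sub_kermxP; rewrite tr_col_mx mul_mx_row mx my row_mx0.
have : (col_mx (val l) (val l') <= kermx A^T)%MS by rewrite col_mx_sub !inK.
move/mxrankS; rewrite mxrank_ker mxrank_tr => le.
have ll2 := rank_col_mx_ge2 (valP l) (valP l') (neqv _ _ ll').
have xy2 := rank_col_mx_ge2 (valP x) (valP y) (neqv _ _ xy).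
by have := leq_trans ll2 (leq_trans le (leq_sub2l 3 xy2)).
Qed.

Definition normalize (v : 'rV[F]_3) : 'rV[F]_3 :=
  let i1 := @Ordinal 3 1 isT in let i2 := @Ordinal 3 2 isT in
  if v 0 ord0 != 0 then (v 0 ord0)^-1 *: v
  else if v 0 i1 != 0 then (v 0 i1)^-1 *: v else (v 0 i2)^-1 *: v.

Lemma normalizeP (v : 'rV[F]_3) : v != 0 ->
  normalized (normalize v) /\ exists2 k, k != 0 & normalize v = k *: v.
Proof.
move=> v0; rewrite /normalize; set i1 := Ordinal _; set i2 := Ordinal _.
have ord3P (j : 'I_3) : [\/ j = ord0, j = i1 | j = i2].
  by case: j => [[|[|[|//]]] ?]; [apply: Or31|apply: Or32|apply: Or33]; apply: val_inj.
have normal_at (i : 'I_3) : v 0 i != 0 -> (forall j : 'I_3, (j < i)%N -> v 0 j = 0) ->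
    normalized ((v 0 i)^-1 *: v).
  move=> vi before; apply/existsP; exists i; rewrite mxE mulVf // eqxx /=.
  by apply/forallP => j; apply/implyP => /before; rewrite mxE => ->; rewrite mulr0.
case: ifP => [h0|/negbFE/eqP h0].
  split; last by exists (v 0 ord0)^-1; rewrite ?invr_eq0.
  by apply: normal_at.
case: ifP => [h1|/negbFE/eqP h1].
  split; last by exists (v 0 i1)^-1; rewrite ?invr_eq0.
  by apply: normal_at => // j; case: (ord3P j) => ->.
have h2 : v 0 i2 != 0.
  apply: contra v0 => /eqP h2; apply/eqP/rowP=> j; rewrite mxE.
  by case: (ord3P j) => ->.
split; last by exists (v 0 i2)^-1; rewrite ?invr_eq0.
by apply: normal_at => // j; case: (ord3P j) => ->.
Qed.

Definition pair_row (a b : F) : 'rV[F]_2 := \row_(i < 2) (if i == ord0 then a else b).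

(* Every point lies on at least q + 1 lines: the lines through P are the
   points of the projective line P^perp, parametrised by F + {infinity}. *)
Lemma pencil_card (P : pg_point F) : (#|F|.+1 <= #|pencil P|)%N.
Proof.
set K := kermx (val P)^T.
have rK : \rank K = 2%N.
  by rewrite mxrank_ker mxrank_tr rank_rV normalized_neq0 // (valP P).
have [B fB sB] : exists2 B : 'M[F]_(2, 3), row_free B & (B <= K)%MS.
  move: (row_base_free K) (eq_row_base K); move: (row_base K); rewrite rK.
  by move=> B fB eB; exists B; rewrite ?eB.
pose coords (o : option F) := if o is Some t then pair_row 1 t else pair_row 0 1.
pose g o := coords o *m B.
have g0 o : g o != 0.
  rewrite -(mul0mx _ B) (inj_eq (row_free_inj fB)); apply/eqP => /rowP e.
  by case: o e => [t|] e; [have := e ord0 | have := e ord_max];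
    rewrite !mxE /= => /eqP; rewrite oner_eq0.
pose f o : pg_line F := insubd (P : pg_line F) (normalize (g o)).
have fE o : val (f o) = normalize (g o).
  by rewrite /f insubdK //; case: (normalizeP (g0 o)).
have finj : injective f.
  move=> o o' /(congr1 val); rewrite !fE.
  case: (normalizeP (g0 o)) => _ [k k0 ->]; case: (normalizeP (g0 o')) => _ [k' k0' ->].
  rewrite /g !scalemxAl => /(row_free_inj fB)/rowP e.
  have := e ord0; have := e ord_max; rewrite !mxE; clear e g0 fE.
  case: o => [t|]; case: o' => [t'|] //=; rewrite !mxE /= ?mulr1 ?mulr0.
  - by move=> ett kk; move: ett; rewrite kk => /(mulfI k0') ->.
  - by move=> _ k00; move: k0; rewrite k00 eqxx.
  - by move=> _ k00; move: k0'; rewrite -k00 eqxx.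
rewrite -card_option -(card_imset _ finj); apply: subset_leq_card.
apply/subsetP => _ /imsetP[o _ ->]; rewrite inE incidentE fE.
case: (normalizeP (g0 o)) => _ [k _ ->].
by rewrite scalemx_sub // (submx_trans (submxMl _ _) sB).
Qed.
End ProjectivePlane.

Section PrimeField.
Local Open Scope ring_scope.
Variables (p : nat) (p_pr : prime p).

Lemma Fp_val_lt (x : 'F_p) : (val x < p)%N.
Proof. by rewrite -[X in (_ < X)%N](Fp_cast p_pr) ltn_ord. Qed.

Lemma Fp_val1 : val (1 : 'F_p) = 1%N.
Proof. by rewrite /= modn_small. Qed.

Lemma Fp_valN1 : val (-1 : 'F_p) = p.-1.
Proof.
set y := val (-1 : 'F_p).
have p_dvd : (p %| y.+1)%N.
  by rewrite (dvdn_pcharf (pchar_Fp p_pr)) -[y.+1]addn1 natrD natr_Zp addNr.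
apply/eqP; rewrite -eqSS prednK ?prime_gt0 // eqn_leq Fp_val_lt.
exact: dvdn_leq p_dvd.
Qed.

Lemma Fp_dvd_sum (I : finType) (P : pred I) (f : I -> 'F_p) :
  (p %| \sum_(i | P i) val (f i))%N = (\sum_(i | P i) f i == 0).
Proof.
rewrite (dvdn_pcharf (pchar_Fp p_pr)) natr_sum.
by under eq_bigr do rewrite natr_Zp.
Qed.
End PrimeField.

Section PencilCounting.
Variable F : finFieldType.

(* Double counting over the pencil of y: a point x != y is counted once per
   line joining it to y, the point y itself once per line of the pencil. *)
Lemma pencil_sum (y : pg_point F) (f : pg_point F -> nat) :
  (\sum_(l in pencil y) \sum_(x | incident x l) f x
   = f y * #|pencil y| + \sum_(x | x != y) f x * #|pencil y :&: pencil x|)%N.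
Proof.
rewrite (exchange_big_dep predT) //= (bigD1 y) //=.
congr (_ + _)%N; last apply: eq_bigr => x _.
all: rewrite sum_nat_const mulnC; congr (_ * _)%N; apply: eq_card => l.
all: by rewrite unfold_in /= !inE ?andbb.
Qed.

(* Since two points are joined by at most one line. *)
Lemma pencil_sum_le (y : pg_point F) (f : pg_point F -> nat) :
  (\sum_(l in pencil y) \sum_(x | incident x l) f x
   <= f y * #|pencil y| + \sum_(x | x != y) f x)%N.
Proof.
rewrite pencil_sum leq_add2l; apply: leq_sum => x xy.
by rewrite -[leqRHS]muln1 leq_mul2l unique_line 1?eq_sym ?orbT.
Qed.
End PencilCounting.

(* A word of the dual code sums to zero over every line: pair it with the
   incidence vector of that line. *)
Lemma dual_line_sum (F : finFieldType) (p : nat) (c : word F p) :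
  in_dual c -> forall l : pg_line F, (\sum_(x | incident x l) c x = 0)%R.
Proof.
move=> dual l; rewrite -[RHS](dual (inc_vec p l)); last first.
  exists [ffun l' => ((l' == l) : nat)%:R]%R => x.
  rewrite (bigD1 l) //= !ffunE eqxx mul1r big1 ?addr0 // => l' /negbTE.
  by rewrite ffunE => ->; rewrite mul0r.
rewrite /dotw big_mkcond; apply: eq_bigr => x _; rewrite ffunE.
by case: (incident x l); rewrite ?mulr1 ?mulr0.
Qed.

Section DualCodewords.
Variables (F : finFieldType) (p : nat) (c : word F p).
Hypothesis p_pr : prime p.
(* c sums to zero on every line, as do the words of C^perp (dual_line_sum). *)
Hypothesis line_sum0 : forall l : pg_line F, (\sum_(x | incident x l) c x = 0)%R.

Let S := [set x | c x != 0%R].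

Definition support_on (l : pg_line F) : nat := (\sum_(x | incident x l) (x \in S))%N.

Lemma card_support_split (y : pg_point F) :
  y \in S -> #|S| = (\sum_(x | x != y) (x \in S : nat)).+1.
Proof.
by move=> yS; rewrite -sum1_card big_mkcond (bigD1 y) //= yS add1n.
Qed.

(* If every line through P meets the support in at least three points, each
   line of the pencil contributes two support points besides P. *)
Lemma rich_pencil_weight (P : pg_point F) :
  P \in S -> (forall l, l \in pencil P -> 3 <= support_on l)%N ->
  (2 * #|pencil P| + 1 <= #|S|)%N.
Proof.
move=> PS rich.
have lower : (3 * #|pencil P| <= \sum_(l in pencil P) support_on l)%N.
  by rewrite -sum1_card big_distrr /=; apply: leq_sum => l /rich.
have upper := pencil_sum_le P (fun x => x \in S : nat).
rewrite PS mul1n in upper.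
move: (card_support_split PS) upper lower; rewrite /support_on.
set A := (\sum_(l in pencil P) _)%N; set B := (\sum_(x | x != P) _)%N; lia.
Qed.

(* A line through a support point P meeting the support in at most two points
   is a 2-secant {P, R} with c R = - c P, since the line sum must vanish. *)
Lemma two_secant (P : pg_point F) (l : pg_line F) :
  P \in S -> incident P l -> (support_on l <= 2)%N ->
  exists2 R, R \in S & c R = (- c P)%R.
Proof.
move=> PS Pl sl.
set A := [set x | incident x l && (x \in S)].
have PA : P \in A by rewrite inE Pl PS.
have cardA : #|A| = support_on l.
  rewrite /support_on -sum1_card big_mkcond [RHS]big_mkcond; apply: eq_bigr => x _.
  by rewrite inE; case: (incident x l); case: (x \in S).
have sumA : (\sum_(x in A) c x = 0)%R.
  rewrite -[RHS](line_sum0 l) big_mkcond [RHS]big_mkcond; apply: eq_bigr => x _.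
  rewrite inE; case: (incident x l) => //=.
  by case: (boolP (x \in S)) => //; rewrite inE negbK => /eqP ->.
move: sumA; rewrite (big_setD1 P PA) /=.
have : (#|A :\ P| <= 1)%N by move: (cardsD1 P A); rewrite PA cardA; lia.
rewrite leq_eqVlt ltnS leqn0 => /orP[/cards1P[R eR] | /eqP/cards0_eq ->].
- rewrite eR big_set1 => /eqP; rewrite addr_eq0 => /eqP cPR.
  have : R \in A :\ P by rewrite eR set11.
  rewrite !inE => /andP[_ /andP[_ RS]].
  by exists R; rewrite ?inE ?RS ?cPR ?opprK.
- by rewrite big_set0 addr0 => cP0; move: PS; rewrite inE cP0 eqxx.
Qed.

Section Residues.
(* The scaled word a c, read through the residues 0, ..., p - 1 in N;
   residues vanish off the support. *)
Variable a : 'F_p.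
Definition residue (x : pg_point F) : nat := val (a * c x)%R.

Lemma residue_le (x : pg_point F) : (residue x <= p.-1 * (x \in S))%N.
Proof.
case: (boolP (x \in S)) => xS; rewrite ?muln1 ?muln0.
  by rewrite -ltnS prednK ?prime_gt0 // Fp_val_lt.
by move: xS; rewrite inE negbK /residue => /eqP ->; rewrite mulr0.
Qed.

Lemma residue_line_dvd (l : pg_line F) : (p %| \sum_(x | incident x l) residue x)%N.
Proof. by rewrite Fp_dvd_sum // -mulr_sumr line_sum0 mulr0. Qed.

(* Each line through y carries a positive multiple of p, hence at least p. *)
Lemma pencil_residue_lower (y : pg_point F) : (0 < residue y)%N ->
  (p * #|pencil y| <= residue y * #|pencil y| + \sum_(x | x != y) residue x)%N.
Proof.
move=> ry; apply: leq_trans (pencil_sum_le y residue).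
rewrite mulnC -sum_nat_const; apply: leq_sum => l yl.
apply: dvdn_leq (residue_line_dvd l).
by move: yl; rewrite inE => yl; rewrite (bigD1 y) //= ltn_addr.
Qed.

(* A line through a support point carries at most p - 1 per support point and
   a multiple of p in total, so it falls short of p * support_on l by at least p. *)
Lemma line_residue_upper (l : pg_line F) (y : pg_point F) :
  y \in S -> incident y l ->
  (\sum_(x | incident x l) residue x + p <= p * support_on l)%N.
Proof.
move=> yS yl; have p_gt0 := prime_gt0 p_pr.
have le_s : (\sum_(x | incident x l) residue x <= p.-1 * support_on l)%N.
  by rewrite /support_on big_distrr; apply: leq_sum => x _; apply: residue_le.
have s_gt0 : (0 < support_on l)%N by rewrite /support_on (bigD1 y) //= yS.
case/dvdnP: (residue_line_dvd l) le_s => m -> le_s.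
have lt_ms : (m < support_on l)%N.
  rewrite -(ltn_pmul2r p_gt0); apply: leq_ltn_trans le_s _.
  by rewrite mulnC ltn_pmul2l // ltn_predL.
by rewrite -mulSnr mulnC leq_pmul2l.
Qed.

(* Summing over the pencil of a support point y, and using that two points
   are joined by at most one line. *)
Lemma pencil_residue_upper (y : pg_point F) : y \in S ->
  (residue y * #|pencil y| + \sum_(x | x != y) residue x <= p * (#|S|).-1)%N.
Proof.
move=> yS.
have pencil_bound : (\sum_(l in pencil y) \sum_(x | incident x l) residue x
    + #|pencil y| * p <= p * \sum_(l in pencil y) support_on l)%N.
  rewrite -sum_nat_const -big_split big_distrr; apply: leq_sum => l.
  by rewrite inE; apply: line_residue_upper.
have pointwise : (\sum_(x | x != y) residue x
      + p * \sum_(x | x != y) (x \in S) * #|pencil y :&: pencil x|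
    <= \sum_(x | x != y) residue x * #|pencil y :&: pencil x|
      + p * \sum_(x | x != y) (x \in S : nat))%N.
  rewrite !big_distrr -!big_split; apply: leq_sum => x xy /=.
  move: (unique_line xy) (residue_le x); rewrite [pencil x :&: _]setIC.
  case: #|_| => [|[|//]] _; case: (x \in S) => /=; lia.
move: pencil_bound pointwise (card_support_split yS).
rewrite /support_on !pencil_sum yS mul1n.
set A := (\sum_(x | x != y) residue x * _)%N.
set B := (\sum_(x | x != y) (x \in S) * _)%N.
set W := (\sum_(x | x != y) residue x)%N.
set X := (\sum_(x | x != y) (x \in S : nat))%N.
by move=> ? ? ->; rewrite succnK; lia.
Qed.
End Residues.

(* A pair of support points with opposite values: scaling by (c P)^-1 gives
   residues 1 at P and p - 1 at R; the pencil of P is estimated from below,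
   that of R from above, and the residue total links the two estimates. *)
Lemma opposite_pair_weight (P R : pg_point F) :
  P \in S -> R \in S -> c R = (- c P)%R ->
  (p.-1 * (#|pencil P| + #|pencil R|) + 2 <= p * #|S|)%N.
Proof.
move=> PS RS cR; have cP : c P != 0%R by move: PS; rewrite inE.
pose a := (c P)^-1%R.
have resP : residue a P = 1%N by rewrite /residue mulVf // Fp_val1.
have resR : residue a R = p.-1 by rewrite /residue cR mulrN mulVf // Fp_valN1.
have lowP := pencil_residue_lower (a := a) (y := P); rewrite resP in lowP.
have upR := pencil_residue_upper a RS; rewrite resR in upR.
have split_at y : (\sum_x residue a x = residue a y + \sum_(x | x != y) residue a x)%N.
  by rewrite (bigD1 y).
have total := etrans (esym (split_at P)) (split_at R); rewrite resP resR in total.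
have w_gt0 : (0 < #|S|)%N by apply/card_gt0P; exists P.
move: (lowP isT) upR total w_gt0.
set WP := (\sum_(x | x != P) _)%N; set WR := (\sum_(x | x != R) _)%N.
case: (p) (prime_gt0 p_pr) => // k _; case: #|S| => // w; rewrite !succnK; lia.
Qed.

(* Every nonzero word orthogonal to all lines satisfies
   p |S| >= 2 (p - 1)(q + 1) + 2: either every line through a support point P
   meets the support three times, or there is a 2-secant through P. *)
Lemma dual_weight_bound : c != 0%R -> (2 * p.-1 * #|F|.+1 + 2 <= p * #|S|)%N.
Proof.
move=> c0; have p_gt0 := prime_gt0 p_pr.
have /set0Pn[P PS] : S != set0.
  apply: contra c0 => /eqP S0; apply/eqP/ffunP => x; rewrite ffunE.
  by apply/eqP; move: (in_set0 x); rewrite -S0 inE => /negbFE.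
have NP := pencil_card P.
case: (boolP [exists l, (l \in pencil P) && (support_on l <= 2)%N]).
  case/existsP => l /andP[]; rewrite inE => Pl sl.
  have [R RS cR] := two_secant PS Pl sl.
  have := opposite_pair_weight PS RS cR; have NR := pencil_card R.
  have : (p.-1 * (#|F|.+1 + #|F|.+1) <= p.-1 * (#|pencil P| + #|pencil R|))%N.
    by rewrite leq_mul2l leq_add ?orbT.
  case: (p) p_gt0 => // k _; rewrite succnK; lia.
rewrite negb_exists => /forallP rich.
have heavy : (2 * #|pencil P| + 1 <= #|S|)%N.
  by apply: rich_pencil_weight => // l Pl; move: (rich l); rewrite Pl -ltnNge.
case: (p) p_gt0 => // k _; rewrite succnK.
have : (k.+1 * (2 * #|F|.+1 + 1) <= k.+1 * #|S|)%N.
  by rewrite leq_mul2l (leq_trans _ heavy) ?orbT // leq_add2r leq_mul2l NP orbT.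
lia.
Qed.
End DualCodewords.

Lemma weight_bound_arith (p q w : nat) :
  (p <= q)%N -> (2 * p.-1 * q.+1 + 2 <= p * w)%N ->
  (p = 7 -> 12 * q + 6 <= 7 * w)%N /\ (11 <= p -> 12 * q + 18 <= 7 * w)%N.
Proof.
move=> pq bound; split=> [p7 | p11]; first by move: bound; rewrite p7; lia.
case: p pq bound p11 => // k pq; rewrite succnK => bound k10.
rewrite leqNgt; apply/negP => small.
have : (k.+1 * (7 * w) < k.+1 * (12 * q + 18))%N by rewrite ltn_pmul2l.
nia.
Qed.

Lemma prime_gt7 (p : nat) : prime p -> (7 < p)%N -> (11 <= p)%N.
Proof.
move=> p_pr p7; rewrite leqNgt; apply: contraL p_pr => p_lt11.
have : [|| p == 8, p == 9 | p == 10]%N by lia.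
by case/or3P => /eqP ->.
Qed.

Theorem mainTheorem20 (p h : nat) (F : finFieldType) (c : word F p) :
  prime p -> (1 <= h)%N -> #|F| = (p ^ h)%N -> min_weight_dual c ->
  (p = 7 -> (12 * p ^ h + 6 <= 7 * wt c)%N) /\
  (7 < p -> (12 * p ^ h + 18 <= 7 * wt c)%N)%N.
Proof.
move=> p_pr h_gt0 cardF [dual c0 _]; rewrite -cardF.
have p_le_q : (p <= #|F|)%N.
  by rewrite cardF -{1}(expn1 p) leq_pexp2l // prime_gt0.
have := dual_weight_bound p_pr (dual_line_sum dual) c0.
case/(weight_bound_arith p_le_q) => bound7 bound11.
by split=> // /(prime_gt7 p_pr).
Qed.
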